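(* Let $\mathcal C$ be an additive category and let $\mathcal F$, $\mathcal G$ and $\bar\cdot$ be additive endofunctors of $\mathcal C$, where $\bar\cdot$ is the identity on objects and an involution on morphisms. Let $f$ be a natural transformation from $\mathcal F$ to $\mathcal G$, and let $\partial:\mathrm{Hom}_{\mathcal C}(A,B)\to\mathrm{Hom}_{\mathcal C}(\mathcal G A,\mathcal F B)$ be an operation on Hom-sets such that: (1) $\partial$ is $\mathbb{Z}$-linear: $\partial(\phi-\psi)=\partial\phi-\partial\psi$ for $\phi,\psi\in\mathrm{Hom}(A,B)$; (2) for $\phi\in\mathrm{Hom}(A,B)$: $\mathcal G(\phi-\bar\phi)=f_B\,\partial\phi$ and $\mathcal F(\phi-\bar\phi)=\partial\phi\,f_A$; (3) for composable $\phi\in\mathrm{Hom}(A,B)$, $\psi\in\mathrm{Hom}(B,C)$: $\partial(\psi\phi)=\partial\psi\,\mathcal G\phi+\mathcal F\bar\psi\,\partial\phi=\partial\psi\,\mathcal G\bar\phi+\mathcal F\psi\,\partial\phi$. Let $C$ be a chain complex over $\mathcal C$ with differential $d$; then $f$ gives a chain map $f_C:\mathcal F C\to\mathcal G C$. Let $\bar C$ be the chain complex obtained by applying $\bar\cdot$ to the differential of $C$ (same objects). Then the mapping cones $\mathrm{Cone}(f_C)$ and $\mathrm{Cone}(f_{\bar C})$ are isomorphic chain complexes.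
   Context: Convention for mapping cones: for a chain map $g:X\to Y$ (differentials of degree $+1$), $\mathrm{Cone}(g)=X[-1]\oplus Y$ with differential $\begin{pmatrix} d_X & 0\\ g\,\varepsilon_X & d_Y\end{pmatrix}$, where $\varepsilon_X$ is the identity in even homological degrees and minus the identity in odd degrees. *)

From mathcomp Require Import all_boot all_algebra.
Set Implicit Arguments. Unset Strict Implicit. Unset Printing Implicit Defensive.
Import GRing.Theory.
Local Open Scope ring_scope.

Record addCat := AddCat {
  Obj : Type;
  Mor : Obj -> Obj -> zmodType;
  idm : forall A, Mor A A;
  mcomp : forall A B C, Mor B C -> Mor A B -> Mor A C;
  compA : forall A B C D (h : Mor C D) (g : Mor B C) (f : Mor A B),
      mcomp h (mcomp g f) = mcomp (mcomp h g) f;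
  comp1m : forall A B (f : Mor A B), mcomp (idm B) f = f;
  compm1 : forall A B (f : Mor A B), mcomp f (idm A) = f;
  compBl : forall A B C (g g' : Mor B C) (f : Mor A B),
      mcomp (g - g') f = mcomp g f - mcomp g' f;
  compBr : forall A B C (g : Mor B C) (f f' : Mor A B),
      mcomp g (f - f') = mcomp g f - mcomp g f';
  zobj : Obj;
  zobj_id : idm zobj = 0;
  bip : Obj -> Obj -> Obj;
  bip_inl : forall A B, Mor A (bip A B);
  bip_inr : forall A B, Mor B (bip A B);
  bip_pl : forall A B, Mor (bip A B) A;
  bip_pr : forall A B, Mor (bip A B) B;
  bip_plinl : forall A B, mcomp (bip_pl A B) (bip_inl A B) = idm A;
  bip_prinr : forall A B, mcomp (bip_pr A B) (bip_inr A B) = idm B;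
  bip_plinr : forall A B, mcomp (bip_pl A B) (bip_inr A B) = 0;
  bip_prinl : forall A B, mcomp (bip_pr A B) (bip_inl A B) = 0;
  bip_sum : forall A B, mcomp (bip_inl A B) (bip_pl A B)
                        + mcomp (bip_inr A B) (bip_pr A B) = idm (bip A B)
}.

Arguments mcomp {_ A B C}.
Arguments idm {_}.
Arguments Mor : clear implicits.
Arguments bip : clear implicits.

Record addFunctor (C : addCat) := AddFunctor {
  FO : Obj C -> Obj C;
  FM : forall A B, Mor C A B -> Mor C (FO A) (FO B);
  FM_id : forall A, FM (idm A) = idm (FO A);
  FM_comp : forall A B D (g : Mor C B D) (f : Mor C A B),
      FM (mcomp g f) = mcomp (FM g) (FM f);
  FM_add : forall A B (f g : Mor C A B), FM (f - g) = FM f - FM g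
}.

Record addInvolution (C : addCat) := AddInvolution {
  bar : forall A B, Mor C A B -> Mor C A B;
  bar_id : forall A, bar (idm A) = idm A;
  bar_comp : forall A B D (g : Mor C B D) (f : Mor C A B),
      bar (mcomp g f) = mcomp (bar g) (bar f);
  bar_add : forall A B (f g : Mor C A B), bar (f - g) = bar f - bar g;
  bar_invol : forall A B (f : Mor C A B), bar (bar f) = f
}.

(* Cochain data indexed by int, differential of degree +1. *)
Record precomplex (C : addCat) := Precomplex {
  cobj : int -> Obj C;
  cdiff : forall n : int, Mor C (cobj n) (cobj (n + 1))
}.

Definition is_complex (C : addCat) (X : precomplex C) : Prop :=
  forall n : int, mcomp (cdiff X (n + 1)) (cdiff X n) = 0.

Definition is_chain_map (C : addCat) (X Y : precomplex C)
  (m : forall n, Mor C (cobj X n) (cobj Y n)) : Prop :=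
  forall n : int, mcomp (cdiff Y n) (m n) = mcomp (m (n + 1)) (cdiff X n).

Definition complex_iso (C : addCat) (X Y : precomplex C) : Prop :=
  exists (u : forall n, Mor C (cobj X n) (cobj Y n))
         (v : forall n, Mor C (cobj Y n) (cobj X n)),
    [/\ is_chain_map u, is_chain_map v,
        forall n, mcomp (v n) (u n) = idm (cobj X n)
      & forall n, mcomp (u n) (v n) = idm (cobj Y n)].

Definition Fcomplex (C : addCat) (F : addFunctor C) (X : precomplex C) :
  precomplex C :=
  @Precomplex C (fun n => FO F (cobj X n)) (fun n => FM F (cdiff X n)).

Definition barcomplex (C : addCat) (b : addInvolution C) (X : precomplex C) :
  precomplex C :=
  @Precomplex C (cobj X) (fun n => bar b (cdiff X n)).

Definition eps_at (C : addCat) (A B : Obj C) (k : int) (h : Mor C A B) :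
  Mor C A B := if odd `|k|%N then - h else h.

(* Cone(g) = X[-1] (+) Y, with X[-1]^n = X^(n+1), and differential
   [[d_X, 0], [g eps_X, d_Y]], eps_X taken in the degree of X. *)
Definition cone (C : addCat) (X Y : precomplex C)
  (g : forall n, Mor C (cobj X n) (cobj Y n)) : precomplex C :=
  @Precomplex C (fun n => bip C (cobj X (n + 1)) (cobj Y n))
   (fun n =>
      mcomp (bip_inl _ _) (mcomp (cdiff X (n + 1)) (bip_pl _ _))
    + mcomp (bip_inr _ _) (mcomp (eps_at (n + 1) (g (n + 1))) (bip_pl _ _))
    + mcomp (bip_inr _ _) (mcomp (cdiff Y n) (bip_pr _ _))).

(* The isomorphism is a shear. Writing the cone differentials as block
   matrices [[F d, 0], [eps f, G d]] and [[F dbar, 0], [eps f, G dbar]], the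
   map [[1, a_n], [0, 1]] with a_n = eps_(n+1) (del d_n) intertwines them:
   condition (2) turns F dbar and G dbar into F d - del d f and G d - f del d,
   which matches the diagonal blocks, and condition (3) applied to d d = 0
   gives del d G d + F dbar del d = 0, which matches the off-diagonal block. *)
From Pilot Require Import Defs.
From mathcomp Require Import all_boot all_algebra.
Set Implicit Arguments. Unset Strict Implicit. Unset Printing Implicit Defensive.
Import GRing.Theory.
Local Open Scope ring_scope.

Lemma odd_absz_add1 (n : int) : odd `|(n + 1)%R|%N = ~~ odd `|n|%N.
Proof.
case: n => [m|m]; first by rewrite -PoszD absz_nat addn1.
rewrite NegzE; case: m => [|m] //.
by rewrite -[m.+2]addn1 PoszD opprD addrNK !abszN !absz_nat /= addn0 negbK.
Qed.

Section AddCatTheory.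
Variable C : addCat.
Implicit Types A B D : Obj C.

Lemma comp0r A B D (g : Mor C B D) : mcomp g (0 : Mor C A B) = 0.
Proof. by have := compBr g (0 : Mor C A B) 0; rewrite subrr => ->; rewrite subrr. Qed.

Lemma comp0l A B D (f : Mor C A B) : mcomp (0 : Mor C B D) f = 0.
Proof. by have := compBl (0 : Mor C B D) 0 f; rewrite subrr => ->; rewrite subrr. Qed.

Lemma compNr A B D (g : Mor C B D) (f : Mor C A B) : mcomp g (- f) = - mcomp g f.
Proof. by rewrite -sub0r compBr comp0r sub0r. Qed.

Lemma compNl A B D (g : Mor C B D) (f : Mor C A B) : mcomp (- g) f = - mcomp g f.
Proof. by rewrite -sub0r compBl comp0l sub0r. Qed.

Lemma compDr A B D (g : Mor C B D) (f f' : Mor C A B) :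
  mcomp g (f + f') = mcomp g f + mcomp g f'.
Proof. by have := compBr g f (- f'); rewrite opprK => ->; rewrite compNr opprK. Qed.

Lemma compDl A B D (g g' : Mor C B D) (f : Mor C A B) :
  mcomp (g + g') f = mcomp g f + mcomp g' f.
Proof. by have := compBl g (- g') f; rewrite opprK => ->; rewrite compNl opprK. Qed.

(* Block matrices between biproducts: [bmx p q r s] is [[p, q], [r, s]]. *)
Definition bmx A B A' B' (p : Mor C A A') (q : Mor C B A') (r : Mor C A B')
    (s : Mor C B B') : Mor C (bip C A B) (bip C A' B') :=
  mcomp (bip_inl _ _) (mcomp p (bip_pl _ _))
  + mcomp (bip_inl _ _) (mcomp q (bip_pr _ _))
  + mcomp (bip_inr _ _) (mcomp r (bip_pl _ _))
  + mcomp (bip_inr _ _) (mcomp s (bip_pr _ _)).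

Variables (A B A' B' : Obj C).
Variables (p : Mor C A A') (q : Mor C B A') (r : Mor C A B') (s : Mor C B B').

Lemma pl_bmx : mcomp (bip_pl _ _) (bmx p q r s) =
  mcomp p (bip_pl _ _) + mcomp q (bip_pr _ _).
Proof.
by rewrite !compDr !Defs.compA bip_plinl bip_plinr !comp1m !comp0l !addr0.
Qed.

Lemma pr_bmx : mcomp (bip_pr _ _) (bmx p q r s) =
  mcomp r (bip_pl _ _) + mcomp s (bip_pr _ _).
Proof.
by rewrite !compDr !Defs.compA bip_prinl bip_prinr !comp1m !comp0l !add0r.
Qed.

Lemma bmx_inl : mcomp (bmx p q r s) (bip_inl _ _) =
  mcomp (bip_inl _ _) p + mcomp (bip_inr _ _) r.
Proof.
rewrite !compDl -!Defs.compA bip_plinl bip_prinl !compm1 !comp0r.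
by rewrite !addr0.
Qed.

Lemma bmx_inr : mcomp (bmx p q r s) (bip_inr _ _) =
  mcomp (bip_inl _ _) q + mcomp (bip_inr _ _) s.
Proof.
rewrite !compDl -!Defs.compA bip_plinr bip_prinr !compm1 !comp0r.
by rewrite addr0 add0r.
Qed.

Lemma bmx_eta (h : Mor C (bip C A B) (bip C A' B')) :
  h = bmx (mcomp (bip_pl _ _) (mcomp h (bip_inl _ _)))
          (mcomp (bip_pl _ _) (mcomp h (bip_inr _ _)))
          (mcomp (bip_pr _ _) (mcomp h (bip_inl _ _)))
          (mcomp (bip_pr _ _) (mcomp h (bip_inr _ _))).
Proof.
have {1}-> : h = mcomp (idm _) (mcomp h (idm _)) by rewrite comp1m compm1.
rewrite -{1}(bip_sum A B) -(bip_sum A' B') !compDr !compDl.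
by rewrite /bmx -!Defs.compA addrACA addrA.
Qed.

Lemma bmx1 : bmx (idm A) 0 0 (idm B) = idm (bip C A B).
Proof. by rewrite /bmx !comp0l !comp0r !addr0 !comp1m bip_sum. Qed.

End AddCatTheory.

Section BlockMatrices.
Variable C : addCat.
Variables (A B A' B' A'' B'' : Obj C).

Lemma bmx_mul (p : Mor C A' A'') (q : Mor C B' A'') (r : Mor C A' B'')
    (s : Mor C B' B'') (p' : Mor C A A') (q' : Mor C B A') (r' : Mor C A B')
    (s' : Mor C B B') :
  mcomp (bmx p q r s) (bmx p' q' r' s') =
  bmx (mcomp p p' + mcomp q r') (mcomp p q' + mcomp q s')
      (mcomp r p' + mcomp s r') (mcomp r q' + mcomp s s').
Proof.
rewrite [LHS]bmx_eta -!Defs.compA bmx_inl bmx_inr !Defs.compA pl_bmx pr_bmx.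
rewrite !compDr !compDl -!Defs.compA !(Defs.compA (bip_pl _ _)).
rewrite !(Defs.compA (bip_pr _ _)) bip_plinl bip_plinr bip_prinl bip_prinr.
by rewrite !comp1m !comp0l !comp0r !addr0 !add0r.
Qed.

End BlockMatrices.

Section Shear.
Variables (C : addCat) (A B : Obj C).

Definition shear (a : Mor C B A) : Mor C (bip C A B) (bip C A B) :=
  bmx (idm A) a 0 (idm B).

Lemma shear_mul (a a' : Mor C B A) : mcomp (shear a) (shear a') = shear (a + a').
Proof.
by rewrite /shear bmx_mul !comp1m !compm1 !comp0l !comp0r !addr0 !add0r addrC.
Qed.

Lemma shearN_mul (a : Mor C B A) : mcomp (shear (- a)) (shear a) = idm _.
Proof. by rewrite shear_mul addNr; apply: bmx1. Qed.

Lemma shear_mulN (a : Mor C B A) : mcomp (shear a) (shear (- a)) = idm _.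
Proof. by rewrite shear_mul addrN; apply: bmx1. Qed.

End Shear.

Section Sign.
Variable C : addCat.
Variables (A B D : Obj C) (k : int).

Lemma eps_atN (h : Mor C A B) : eps_at k (- h) = - eps_at k h.
Proof. by rewrite /eps_at; case: (odd _). Qed.

Lemma eps_at_add1 (h : Mor C A B) : eps_at (k + 1) h = - eps_at k h.
Proof. by rewrite /eps_at odd_absz_add1; case: (odd _); rewrite ?opprK. Qed.

Lemma eps_atK (h : Mor C A B) : eps_at k (eps_at k h) = h.
Proof. by rewrite /eps_at; case: (odd _); rewrite ?opprK. Qed.

Lemma comp_eps_atl (g : Mor C B D) (h : Mor C A B) :
  mcomp (eps_at k g) h = eps_at k (mcomp g h).
Proof. by rewrite /eps_at; case: (odd _); rewrite ?compNl. Qed.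

Lemma comp_eps_atr (g : Mor C B D) (h : Mor C A B) :
  mcomp g (eps_at k h) = eps_at k (mcomp g h).
Proof. by rewrite /eps_at; case: (odd _); rewrite ?compNr. Qed.

End Sign.

Lemma cdiff_coneE (C : addCat) (X Y : precomplex C)
    (g : forall n, Mor C (cobj X n) (cobj Y n)) (n : int) :
  cdiff (cone g) n =
  bmx (cdiff X (n + 1)) 0 (eps_at (n + 1) (g (n + 1))) (cdiff Y n).
Proof. by rewrite /bmx comp0l comp0r addr0. Qed.

Lemma chain_map_inverse (C : addCat) (X Y : precomplex C)
    (u : forall n, Mor C (cobj X n) (cobj Y n))
    (v : forall n, Mor C (cobj Y n) (cobj X n)) :
  is_chain_map u -> (forall n, mcomp (v n) (u n) = idm _) ->
  (forall n, mcomp (u n) (v n) = idm _) -> is_chain_map v.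
Proof.
move=> u_chain vu uv n.
rewrite -[LHS]comp1m -(vu (n + 1)) -Defs.compA (Defs.compA (u _)) -u_chain.
by rewrite -Defs.compA uv compm1.
Qed.

Lemma complex_iso_of_inverse (C : addCat) (X Y : precomplex C)
    (u : forall n, Mor C (cobj X n) (cobj Y n))
    (v : forall n, Mor C (cobj Y n) (cobj X n)) :
  is_chain_map u -> (forall n, mcomp (v n) (u n) = idm _) ->
  (forall n, mcomp (u n) (v n) = idm _) -> complex_iso X Y.
Proof.
move=> u_chain vu uv; exists u, v; split=> //.
exact: chain_map_inverse u_chain vu uv.
Qed.

Section ConeShear.
Variables (C : addCat) (F G : addFunctor C) (b : addInvolution C).
Variable f : forall A : Obj C, Mor C (FO F A) (FO G A).
Variable dd : forall A B : Obj C, Mor C A B -> Mor C (FO G A) (FO F B).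
Arguments f : clear implicits.
Hypothesis dd_lin : forall (A B : Obj C) (phi psi : Mor C A B),
  dd (phi - psi) = dd phi - dd psi.
Hypothesis dd_G : forall (A B : Obj C) (phi : Mor C A B),
  FM G (phi - bar b phi) = mcomp (f B) (dd phi).
Hypothesis dd_F : forall (A B : Obj C) (phi : Mor C A B),
  FM F (phi - bar b phi) = mcomp (dd phi) (f A).
Hypothesis dd_comp : forall (A B D : Obj C) (phi : Mor C A B) (psi : Mor C B D),
  dd (mcomp psi phi)
  = mcomp (dd psi) (FM G phi) + mcomp (FM F (bar b psi)) (dd phi).
Variable X : precomplex C.
Hypothesis HX : is_complex X.

Lemma dd0 (A B : Obj C) : dd (0 : Mor C A B) = 0.
Proof. by rewrite -(subrr 0) dd_lin subrr. Qed.

Lemma FM_bar (A B : Obj C) (phi : Mor C A B) :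
  FM F (bar b phi) = FM F phi - mcomp (dd phi) (f A).
Proof. by rewrite -dd_F FM_add opprB addrC subrK. Qed.

Lemma GM_bar (A B : Obj C) (phi : Mor C A B) :
  FM G (bar b phi) = FM G phi - mcomp (f B) (dd phi).
Proof. by rewrite -dd_G FM_add opprB addrC subrK. Qed.

Lemma dd_cdiff_square (n : int) :
  mcomp (FM F (bar b (cdiff X (n + 1)))) (dd (cdiff X n))
  = - mcomp (dd (cdiff X (n + 1))) (FM G (cdiff X n)).
Proof.
by apply/eqP; rewrite -addr_eq0 (addrC (mcomp _ _)) -dd_comp HX dd0.
Qed.

Definition cone_shear (n : int) :=
  shear (eps_at (n + 1) (dd (cdiff X n))).

Lemma cone_shear_chain_map :
  is_chain_map
    (X := cone (X := Fcomplex F X) (Y := Fcomplex G X) (fun n => f (cobj X n)))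
    (Y := cone (X := Fcomplex F (barcomplex b X))
               (Y := Fcomplex G (barcomplex b X)) (fun n => f (cobj X n)))
    cone_shear.
Proof.
move=> n; rewrite !cdiff_coneE /= !bmx_mul.
rewrite !comp1m !compm1 !comp0l !comp0r !addr0 !add0r.
rewrite !comp_eps_atl !comp_eps_atr !eps_atK !(eps_at_add1 (n + 1)) eps_atK.
by rewrite dd_cdiff_square eps_atN FM_bar GM_bar subrKC.
Qed.

Lemma cone_iso_barcomplex :
  complex_iso
    (cone (X := Fcomplex F X) (Y := Fcomplex G X) (fun n => f (cobj X n)))
    (cone (X := Fcomplex F (barcomplex b X))
          (Y := Fcomplex G (barcomplex b X)) (fun n => f (cobj X n))).
Proof.
apply: (complex_iso_of_inverse cone_shear_chain_map) => n.
- exact: shearN_mul.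
- exact: shear_mulN.
Qed.

End ConeShear.

Theorem lemma6p1 (C : addCat) (F G : addFunctor C) (b : addInvolution C)
  (f : forall A : Obj C, Mor C (FO F A) (FO G A))
  (f_nat : forall (A B : Obj C) (phi : Mor C A B),
      mcomp (FM G phi) (f A) = mcomp (f B) (FM F phi))
  (dd : forall A B : Obj C, Mor C A B -> Mor C (FO G A) (FO F B))
  (dd_lin : forall (A B : Obj C) (phi psi : Mor C A B),
      dd A B (phi - psi) = dd A B phi - dd A B psi)
  (dd_G : forall (A B : Obj C) (phi : Mor C A B),
      FM G (phi - bar b phi) = mcomp (f B) (dd A B phi))
  (dd_F : forall (A B : Obj C) (phi : Mor C A B),
      FM F (phi - bar b phi) = mcomp (dd A B phi) (f A))
  (dd_comp1 : forall (A B D : Obj C) (phi : Mor C A B) (psi : Mor C B D),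
      dd A D (mcomp psi phi)
      = mcomp (dd B D psi) (FM G phi) + mcomp (FM F (bar b psi)) (dd A B phi))
  (dd_comp2 : forall (A B D : Obj C) (phi : Mor C A B) (psi : Mor C B D),
      dd A D (mcomp psi phi)
      = mcomp (dd B D psi) (FM G (bar b phi)) + mcomp (FM F psi) (dd A B phi))
  (X : precomplex C) (HX : is_complex X) :
  complex_iso
    (cone (X := Fcomplex F X) (Y := Fcomplex G X) (fun n => f (cobj X n)))
    (cone (X := Fcomplex F (barcomplex b X)) (Y := Fcomplex G (barcomplex b X))
          (fun n => f (cobj X n))).
Proof.
exact: (cone_iso_barcomplex dd_lin dd_G dd_F dd_comp1 HX).
Qed.
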